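(* Let $q\in\mathbb N$, $N>q$, $\theta\in[0,1]$ and $\alpha>1$. Let $\mathbb X=\{x\subseteq\mathbb N: x \text{ finite}, |x|>q\}$ and $\mathbb Y$ the set of size-$q$ subsets of elements of $\mathbb X$. There exist datasets $x\simeq_\Delta x'$ of size $N$ and a function $h:\mathbb Y\to\{0,1\}$ such that the subsampled randomized response mechanism $M=B\circ S$ ($S$ subsampling without replacement with batch size $q$, $B(y)=|h(y)-(1-V)|$, $V\sim\mathrm{Bern}(\theta)$) satisfies $$\Lambda_\alpha(m_x\|m_{x'})=\max_{\tau\in\{\theta,1-\theta\}}\Lambda_\alpha\big((1-w)\mathrm{Bern}(\cdot\mid\theta)+w\,\mathrm{Bern}(\cdot\mid\tau)\ \big\|\ (1-w)\mathrm{Bern}(\cdot\mid\theta)+w\,\mathrm{Bern}(\cdot\mid1-\tau)\big),\quad w=q/N.$$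
   Context: Subsampling without replacement: $s_x(y)=\binom{|x|}{q}^{-1}$ for $y\subseteq x$, $|y|=q$. $b_y$ is the pmf of $B(y)$ on $\{0,1\}$ and $m_x=\sum_y b_y s_x(y)$. $\mathrm{Bern}(\cdot\mid p)$ is the pmf on $\{0,1\}$ with mass $p$ at $1$. $x\simeq_\Delta x'$ iff $x'=(x\setminus\{a\})\cup\{a'\}$ with $a\in x$, $a'\notin x$. $\Lambda_\alpha(p\|q)=\sum_{z\in\{0,1\}}p(z)^\alpha q(z)^{1-\alpha}$. *)

From HB Require Import structures.
From mathcomp Require Import all_boot all_order all_algebra.
From mathcomp Require Import finmap.
From mathcomp Require Import boolp reals ereal exp.
Set Implicit Arguments. Unset Strict Implicit. Unset Printing Implicit Defensive.
Import Order.TTheory GRing.Theory Num.Theory.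
Local Open Scope ring_scope.
Local Open Scope fset_scope.

Section Defs.
Variable R : realType.

Definition bern (p : R) (z : bool) : R := if z then p else 1 - p.

Definition rr_pmf (theta : R) (h : {fset nat} -> bool) (y : {fset nat})
  (z : bool) : R :=
  \sum_(v : bool) bern theta v *
     ((`|(h y)%:R - (1 - (v%:R : R))| == (z%:R : R))%:R).

Definition subsample (q : nat) (x y : {fset nat}) : R :=
  (('C(#|` x|, q))%:R)^-1.

Definition mech_pmf (theta : R) (h : {fset nat} -> bool) (q : nat)
  (x : {fset nat}) (z : bool) : R :=
  \sum_(y <- fpowerset x | #|` y| == q) rr_pmf theta h y z * subsample q x y.

Definition neighbour (x x' : {fset nat}) : Prop :=
  exists a a' : nat, [/\ a \in x, a' \notin x & x' = (x `\ a) `|` [fset a']].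

(* one term p^alpha q^(1-alpha) in \bar R, with the usual conventions
   0 * (anything) = 0 when p = 0, and p^alpha * 0^(1-alpha) = +oo when p > 0
   and q = 0 (alpha > 1). *)
Definition renyi_term (alpha : R) (p q : R) : \bar R :=
  if p == 0 then 0%E
  else if q == 0 then +oo%E
  else (p `^ alpha * q `^ (1 - alpha))%:E.

Definition Lambda (alpha : R) (p q : bool -> R) : \bar R :=
  (renyi_term alpha (p false) (q false) + renyi_term alpha (p true) (q true))%E.

Definition mix (w theta tau : R) (z : bool) : R :=
  (1 - w) * bern theta z + w * bern tau z.

End Defs.

(* Query h_c(y) = [c \notin y] for a fixed point c.  If c is not in the
   dataset, every batch avoids c and the mechanism outputs Bern(theta); if c
   is in it, a batch of size q misses c with probability
   C(N-1, q) / C(N, q) = 1 - q/N, and the output law is the mixture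
   (1 - w) Bern(theta) + w Bern(1 - theta).  Taking for c the point removed
   from x, resp. the point added to x', yields the two Renyi terms with tau =
   1 - theta, resp. tau = theta, and we pick whichever is larger. *)

From HB Require Import structures.
From mathcomp Require Import all_boot all_order all_algebra.
From mathcomp Require Import finmap.
From mathcomp Require Import boolp reals ereal exp.
From mathcomp Require Import ring zify.
Set Implicit Arguments. Unset Strict Implicit. Unset Printing Implicit Defensive.
Import Order.TTheory GRing.Theory Num.Theory.
Local Open Scope fset_scope.
Local Open Scope ring_scope.

Lemma card_draws_notin (T : finType) (c : T) k :
  #|[set Y : {set T} | (#|Y| == k) && (c \notin Y)]| = 'C(#|T|.-1, k).
Proof.
rewrite -(cardsC1 c) -cards_draws; apply: eq_card => Y.
by rewrite !inE subsetC sub1set inE andbC.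
Qed.

Lemma sumr_const_cond (R : pzSemiRingType) (I : finType) (P : pred I) (v : R) :
  \sum_(i | P i) v = #|[set i | P i]|%:R * v.
Proof. by rewrite mulr_natl -sumr_const; apply: eq_bigl => i; rewrite inE. Qed.

Lemma sum_draws_if (R : pzRingType) (T : finType) (c : T) k (a b : R) :
  \sum_(Y : {set T} | #|Y| == k) (if c \notin Y then a else b) =
  'C(#|T|.-1, k)%:R * a + ('C(#|T|, k)%:R - 'C(#|T|.-1, k)%:R) * b.
Proof.
have split_draws (F : {set T} -> R) : \sum_(Y : {set T} | #|Y| == k) F Y =
    \sum_(Y : {set T} | (#|Y| == k) && (c \notin Y)) F Y +
    \sum_(Y : {set T} | (#|Y| == k) && ~~ (c \notin Y)) F Y.
  exact: bigID.
have := split_draws (fun=> 1); rewrite !sumr_const_cond !mulr1 card_draws card_draws_notin.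
move=> ->; rewrite (addrC 'C(_, _)%:R) addrK split_draws.
rewrite (eq_bigr (fun=> a)) => [|Y /andP[_ ->] //].
rewrite [X in _ + X](eq_bigr (fun=> b)) => [|Y /andP[_ /negbTE ->] //].
by rewrite !sumr_const_cond card_draws_notin.
Qed.

Lemma big_fpowerset (V : nmodType) (K : choiceType) (A : {fset K}) (F : {fset K} -> V) :
  \sum_(y <- fpowerset A) F y = \sum_(Y : {set A}) F [fsetval y in Y].
Proof.
rewrite /fpowerset big_imfset /=; last first.
  by move=> X Y _ _ /fsetP eqXY; apply/setP => x; have := eqXY (val x); rewrite !inE.
by rewrite big_enum /=; apply: eq_bigl => Y; rewrite powersetT inE.
Qed.

Lemma card_fsetval (K : choiceType) (A : {fset K}) (Y : {set A}) :
  #|` [fsetval y in Y]| = #|Y|.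
Proof. by rewrite card_imfset /= ?cardE //; exact: val_inj. Qed.

Lemma mem_fsetval (K : choiceType) (A : {fset K}) (Y : {set A}) c (cA : c \in A) :
  (c \in [fsetval y in Y]) = ([` cA] \in Y).
Proof.
apply/imfsetP/idP => [[y /= yY cy]|cY]; last by exists [` cA].
by rewrite (_ : [` cA] = y) //; apply: val_inj.
Qed.

Lemma notin_fsetval (K : choiceType) (A : {fset K}) (Y : {set A}) c :
  c \notin A -> c \notin [fsetval y in Y].
Proof. by move=> cA; apply/imfsetP => -[y /= _ cy]; move: cA; rewrite cy fsvalP. Qed.

Lemma natr_bin_down (F : numFieldType) n k : (k <= n)%N ->
  'C(n.-1, k)%:R = (1 - k%:R / n%:R) * 'C(n, k)%:R :> F.
Proof.
case: n => [|n] kn; first by case: k kn => // _; rewrite mul0r subr0 mul1r.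
have /(congr1 (fun m => m%:R : F)) := mul_bin_down n.+1 k.
rewrite !natrM natrB // => E.
have n0 : n.+1%:R != 0 :> F by rewrite pnatr_eq0.
by apply: (mulfI n0); rewrite E; field.
Qed.

Section SubsampledResponse.
Variable R : realType.
Implicit Types (theta w p : R) (x : {fset nat}).

Lemma rr_pmfE theta h y z :
  rr_pmf theta h y z = bern (if h y then theta else 1 - theta) z.
Proof.
rewrite /rr_pmf big_bool /bern.
by case: (h y); case: z;
  rewrite /= ?(subrr, subr0, sub0r, normrN, normr1, normr0, eqxx, oner_eq0, (eq_sym 0))
    ?mulr1 ?mulr0 ?addr0 ?add0r ?subKr.
Qed.

Lemma mix_id w p : mix w p p = bern p.
Proof. by apply/funext => z; rewrite /mix -mulrDl subrK mul1r. Qed.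

Lemma mech_pmfE theta h q x z :
  mech_pmf theta h q x z =
  (\sum_(Y : {set x} | #|Y| == q) rr_pmf theta h [fsetval y in Y] z) / 'C(#|` x|, q)%:R.
Proof.
rewrite /mech_pmf /subsample -big_distrl /= big_mkcond big_fpowerset /=.
by congr (_ / _); rewrite [RHS]big_mkcond; apply: eq_bigr => Y _; rewrite card_fsetval.
Qed.

Definition avoid (c : nat) (y : {fset nat}) : bool := c \notin y.

Lemma mech_pmf_avoid_notin theta q x c : (q <= #|` x|)%N -> c \notin x ->
  mech_pmf theta (avoid c) q x = bern theta.
Proof.
move=> qx cx; apply/funext => z; rewrite mech_pmfE.
under eq_bigr => Y _ do rewrite rr_pmfE /avoid notin_fsetval //.
by rewrite sumr_const_cond card_draws -cardfE mulrAC divff ?mul1r // pnatr_eq0 -lt0n bin_gt0.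
Qed.

Lemma mech_pmf_avoid_in theta q x c : (q < #|` x|)%N -> c \in x ->
  mech_pmf theta (avoid c) q x = mix (q%:R / #|` x|%:R) theta (1 - theta).
Proof.
move=> qx cx; apply/funext => z; rewrite mech_pmfE.
under eq_bigr => Y _ do rewrite rr_pmfE /avoid (mem_fsetval Y cx) fun_if if_arg.
rewrite sum_draws_if -cardfE natr_bin_down ?(ltnW qx) //.
have C0 : 'C(#|` x|, q)%:R != 0 :> R by rewrite pnatr_eq0 -lt0n bin_gt0 ltnW.
by rewrite /mix; field; rewrite C0 pnatr_eq0 -lt0n (leq_ltn_trans _ qx).
Qed.

End SubsampledResponse.

Lemma card_fset_iota m n : #|` [fset i in iota m n]| = n.
Proof. by rewrite card_fseq undup_id ?iota_uniq // size_iota. Qed.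

Lemma neighbour_iota_shift n : (0 < n)%N ->
  neighbour [fset i in iota 0 n] [fset i in iota 1 n].
Proof.
move=> n0; exists 0%N, n; rewrite !inE !mem_iota /= ltnn n0; split=> //.
by apply/fsetP => i; rewrite !inE !mem_iota /=; lia.
Qed.

Theorem mainTheorem14 (R : realType) (q N : nat) (theta alpha : R) :
  (q < N)%N -> 0 <= theta <= 1 -> 1 < alpha ->
  exists (x x' : {fset nat}) (h : {fset nat} -> bool),
    [/\ #|` x| = N, #|` x'| = N, neighbour x x' &
      let w := (q%:R / N%:R : R) in
      Lambda alpha (mech_pmf theta h q x) (mech_pmf theta h q x') =
      Order.max
        (Lambda alpha (mix w theta theta) (mix w theta (1 - theta)))
        (Lambda alpha (mix w theta (1 - theta)) (mix w theta (1 - (1 - theta))))].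
Proof.
move=> qN _ _.
set x := [fset i in iota 0 N]; set x' := [fset i in iota 1 N].
have cx : #|` x| = N := card_fset_iota 0 N.
have cx' : #|` x'| = N := card_fset_iota 1 N.
have xx' : neighbour x x' by apply: neighbour_iota_shift; apply: leq_ltn_trans qN.
have [x0 x'0 xN x'N] : [/\ 0%N \in x, 0%N \notin x', N \notin x & N \in x'].
  by rewrite !inE !mem_iota /= ltnn; split=> //; lia.
set w := (q%:R / N%:R : R).
have [Hle|Hlt] := leP (Lambda alpha (bern theta) (mix w theta (1 - theta)))
                      (Lambda alpha (mix w theta (1 - theta)) (bern theta)).
- exists x, x', (avoid 0); split=> //=; rewrite subKr !mix_id.
  rewrite mech_pmf_avoid_in ?cx // mech_pmf_avoid_notin ?cx' ?(ltnW qN) //.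
  by rewrite max_r.
- exists x, x', (avoid N); split=> //=; rewrite subKr !mix_id.
  rewrite mech_pmf_avoid_notin ?cx ?(ltnW qN) // mech_pmf_avoid_in ?cx' //.
  by rewrite max_l // ltW.
Qed.
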